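(* In $A_n$ we have, for all $a\in\mathbb{N}_0$, \[ T_i\omega_k^a=\omega_k^aT_i \quad (i\neq k),\qquad T_i(\omega_i^a-x_{i+1}\omega_{i+1}^a)=(\omega_i^a-x_{i+1}\omega_{i+1}^a)T_i, \] for all $1\le i\le n-1$ and $1\le k\le n$.
   Context: $R=\mathbb{Z}[x_1,\dots,x_n]\otimes\bigwedge^\bullet(\omega_1,\dots,\omega_n)$ (supercommutative, $x_i$ even, $\omega_i$ odd); $S_n$ acts by $s_i(x_j)=x_{s_i(j)}$, $s_i(\omega_j)=\omega_j+\delta_{ij}(x_i-x_{i+1})\omega_{i+1}$; $T_i$ denotes the Demazure operator $f\mapsto(f-s_i(f))/(x_i-x_{i+1})$. $A_n$ is the superalgebra of operators on $R$ generated by the $T_i$ and multiplication by elements of $R$. Labeled elements: $\omega_k^0=\omega_k$, $\omega_0^a=0$, $\omega_k^a=\omega_{k-1}^{a-1}-x_k\omega_k^{a-1}$ for $a\ge1$. *)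

From HB Require Import structures.
From mathcomp Require Import all_boot all_algebra all_fingroup.
From mathcomp Require Import mpoly.
From Stdlib Require Import ClassicalEpsilon.
Set Implicit Arguments. Unset Strict Implicit. Unset Printing Implicit Defensive.
Import GRing.Theory.
Local Open Scope ring_scope.

(* The superalgebra R = Z[x_1..x_n] (x) /\(omega_1..omega_n), with 0-based
   indices 'I_n.  An element is a finite function S |-> coefficient of the
   exterior basis monomial omega_S := omega_{s_1} ... omega_{s_k}
   (s_1 < ... < s_k the elements of S in increasing order).
   NB: the product of R is [Rmul] below (NOT the pointwise product of ffuns). *)

Section SuperAlg.
Variable n : nat.

Definition Pol := {mpoly int[n]}.
Definition R := {ffun {set 'I_n} -> Pol}.

(* sign of omega_S * omega_T = sgnST * omega_(S u T) for disjoint S, T :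
   (-1)^(number of pairs (s,t), s in S, t in T, t < s) *)
Definition sgnST (S T : {set 'I_n}) : Pol :=
  (-1) ^+ #|[set p : 'I_n * 'I_n | [&& p.1 \in S, p.2 \in T & (p.2 < p.1)%N]]|.

(* supercommutative product of R (x's even, omegas odd) *)
Definition Rmul (f g : R) : R :=
  [ffun U => \sum_(S : {set 'I_n}) \sum_(T : {set 'I_n})
     (if [disjoint S & T] && (S :|: T == U) then sgnST S T * (f S * g T) else 0)].

Definition polR (p : Pol) : R := [ffun U => if U == set0 then p else 0].
Definition Rone : R := polR 1.
Definition xR (j : 'I_n) : R := polR 'X_j.
Definition om (j : 'I_n) : R := [ffun U => if U == [set j] then 1 else 0].

(* the simple transposition s_i, i = a, i+1 = b, as an algebra automorphism:
   s_i(x_j) = x_{s_i(j)},  s_i(omega_j) = omega_j + delta_{ij}(x_i - x_{i+1}) omega_{i+1} *)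
Definition s_om (a b j : 'I_n) : R :=
  if j == a then om a + Rmul (xR a - xR b) (om b) else om j.

Definition s_basis (a b : 'I_n) (S : {set 'I_n}) : R :=
  foldr (fun j acc => Rmul (s_om a b j) acc) Rone (enum S).

Definition sR (a b : 'I_n) (f : R) : R :=
  \sum_(S : {set 'I_n}) Rmul (polR (msym (tperm a b) (f S))) (s_basis a b S).

(* Demazure operator T_i f = (f - s_i f) / (x_i - x_{i+1}); the quotient is
   unique since x_i - x_{i+1} is a non-zero-divisor of R. *)
Definition Tdem (a b : 'I_n) (f : R) : R :=
  epsilon (inhabits (0 : R)) (fun g : R => Rmul (xR a - xR b) g = f - sR a b f).

(* labeled elements omega_k^a (0-based k; omega_{-1}^a = 0) *)
Fixpoint omL (a : nat) (k : 'I_n) : R :=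
  match a with
  | 0 => om k
  | a'.+1 => (match val k with 0 => 0 | k'.+1 => omL a' (insubd k k') end)
             - Rmul (xR k) (omL a' k)
  end.

End SuperAlg.

(* Write d = x_i - x_(i+1).  The Demazure operator is characterised by
   d * T_i f = f - s_i f, and d is not a zero divisor in R.  So if w is fixed by
   s_i and s_i (w f) = w (s_i f) for all f, then d * T_i (w f) = w (f - s_i f)
   = d * (w T_i f), i.e. T_i commutes with w.  Multiplicativity of s_i on the
   generators omega_k is a sign computation in the exterior basis and passes to
   all omega_k^a.  By induction on a, s_i fixes omega_k^a for k <> i and sends
   omega_i^a to omega_i^a + d omega_(i+1)^a; this defect cancels in
   omega_(i+1)^(a+1) = omega_i^a - x_(i+1) omega_(i+1)^a, the second element. *)

From mathcomp Require Import all_boot all_algebra all_fingroup.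
From mathcomp Require Import mpoly.
From mathcomp Require Import zify ring.
From Stdlib Require Import ClassicalEpsilon.
Set Implicit Arguments. Unset Strict Implicit. Unset Printing Implicit Defensive.
Import GRing.Theory.
Local Open Scope ring_scope.

Section Exterior.
Variable n : nat.
Local Notation Pol := (Pol n).
Local Notation R := (R n).

Definition Rscale (p : Pol) (f : R) : R := [ffun U => p * f U].
Definition omS (S : {set 'I_n}) : R := [ffun U => (U == S)%:R].
Definition sgn_lt (l : 'I_n) (T : {set 'I_n}) : Pol :=
  (-1) ^+ #|[set t in T | (t < l)%N]|.

Lemma sgnST_set0 (T : {set 'I_n}) : sgnST set0 T = 1.
Proof.
rewrite /sgnST (_ : [set p | _] = set0) ?cards0 ?expr0 //.
by apply/setP=> [[a b]]; rewrite !inE.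
Qed.

Lemma sgnST_set1 (l : 'I_n) (T : {set 'I_n}) : sgnST [set l] T = sgn_lt l T.
Proof.
rewrite /sgnST /sgn_lt; congr (_ ^+ _).
rewrite (_ : [set p | _] = setX [set l] [set t in T | (t < l)%N]).
  by rewrite cardsX cards1 mul1n.
by apply/setP=> [[a b]]; rewrite !inE /=; case: (a =P l) => [->|].
Qed.

Lemma sgn_lt_min (l : 'I_n) (T : {set 'I_n}) :
  (forall t, t \in T -> (l < t)%N) -> sgn_lt l T = 1.
Proof.
move=> ltT; rewrite /sgn_lt (_ : [set t in T | _] = set0) ?cards0 ?expr0 //.
apply/setP=> t; rewrite !inE; apply/negbTE/nandP.
by case tT: (t \in T); [right; rewrite -leqNgt ltnW ?ltT | left].
Qed.

Lemma RmulDl (f g h : R) : Rmul (f + g) h = Rmul f h + Rmul g h.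
Proof.
apply/ffunP=> U; rewrite !ffunE -big_split; apply: eq_bigr=> S _.
rewrite -big_split; apply: eq_bigr=> T _; rewrite !ffunE.
by case: ifP=> _; rewrite /= ?addr0 // mulrDl mulrDr.
Qed.

Lemma RmulDr (f g h : R) : Rmul f (g + h) = Rmul f g + Rmul f h.
Proof.
apply/ffunP=> U; rewrite !ffunE -big_split; apply: eq_bigr=> S _.
rewrite -big_split; apply: eq_bigr=> T _; rewrite !ffunE.
by case: ifP=> _; rewrite /= ?addr0 // !mulrDr.
Qed.

Lemma RmulBl (f g h : R) : Rmul (f - g) h = Rmul f h - Rmul g h.
Proof.
apply/ffunP=> U; rewrite !ffunE -sumrB; apply: eq_bigr=> S _.
rewrite -sumrB; apply: eq_bigr=> T _; rewrite !ffunE.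
by case: ifP=> _; rewrite ?subr0 // mulrBl mulrBr.
Qed.

Lemma RmulBr (f g h : R) : Rmul f (g - h) = Rmul f g - Rmul f h.
Proof.
apply/ffunP=> U; rewrite !ffunE -sumrB; apply: eq_bigr=> S _.
rewrite -sumrB; apply: eq_bigr=> T _; rewrite !ffunE.
by case: ifP=> _; rewrite ?subr0 // !mulrBr.
Qed.

Lemma Rmul0l (f : R) : Rmul 0 f = 0.
Proof. by have := RmulBl 0 0 f; rewrite !subrr. Qed.

Lemma Rmul0r (f : R) : Rmul f 0 = 0.
Proof. by have := RmulBr f 0 0; rewrite !subrr. Qed.

Lemma RmulZl (p : Pol) (f g : R) : Rmul (Rscale p f) g = Rscale p (Rmul f g).
Proof.
apply/ffunP=> U; rewrite !ffunE mulr_sumr; apply: eq_bigr=> S _.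
rewrite mulr_sumr; apply: eq_bigr=> T _; rewrite !ffunE.
by case: ifP=> _; [ring | rewrite mulr0].
Qed.

Lemma RmulZr (p : Pol) (f g : R) : Rmul f (Rscale p g) = Rscale p (Rmul f g).
Proof.
apply/ffunP=> U; rewrite !ffunE mulr_sumr; apply: eq_bigr=> S _.
rewrite mulr_sumr; apply: eq_bigr=> T _; rewrite !ffunE.
by case: ifP=> _; [ring | rewrite mulr0].
Qed.

Lemma Rmul_polR (p : Pol) (f : R) : Rmul (polR p) f = Rscale p f.
Proof.
apply/ffunP=> U; rewrite !ffunE (bigD1 set0) //= [X in _ + X]big1 ?addr0; last first.
  move=> S /negbTE S0; apply: big1=> T _; rewrite ffunE S0.
  by case: ifP=> _; rewrite ?mul0r ?mulr0.
rewrite (bigD1 U) //= [X in _ + X]big1 ?addr0; last first.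
  by move=> T /negbTE TU; rewrite set0U TU andbF.
by rewrite set0U eqxx andbT disjoints_subset sub0set sgnST_set0 ffunE eqxx mul1r.
Qed.

Lemma Rmul_omE (l : 'I_n) (f : R) : Rmul (om l) f =
  [ffun U : {set 'I_n} => if l \in U then sgn_lt l (U :\ l) * f (U :\ l) else 0].
Proof.
apply/ffunP=> U; rewrite !ffunE (bigD1 [set l]) //= [X in _ + X]big1 ?addr0; last first.
  move=> S /negbTE Sl; apply: big1=> T _; rewrite ffunE Sl.
  by case: ifP=> _; rewrite ?mul0r ?mulr0.
have splitU (T : {set 'I_n}) : [disjoint [set l] & T] && ([set l] :|: T == U) =
                (l \in U) && (T == U :\ l).
  rewrite disjoints1; apply/idP/idP.
    by case/andP=> lT /eqP <-; rewrite setU11 /= setU1K.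
  by case/andP=> lU /eqP ->; rewrite setD11 /= setD1K.
under eq_bigr do rewrite splitU.
case: (l \in U) => /=; last by rewrite big1.
by rewrite -big_mkcond big_pred1_eq sgnST_set1 ffunE eqxx mul1r.
Qed.

Lemma om_omS (l : 'I_n) : om l = omS [set l].
Proof. by apply/ffunP=> U; rewrite !ffunE; case: eqP. Qed.

Lemma Rone_omS : Rone n = omS set0.
Proof. by apply/ffunP=> U; rewrite !ffunE; case: eqP. Qed.

Lemma Rmul_om_omS (l : 'I_n) (T : {set 'I_n}) : Rmul (om l) (omS T) =
  if l \in T then 0 else Rscale (sgn_lt l T) (omS (l |: T)).
Proof.
apply/ffunP=> U; rewrite Rmul_omE !ffunE.
case lT: (l \in T); rewrite ?ffunE.
  case: ifP=> // lU; case: eqP; rewrite ?mulr0 // => UlT.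
  by move: lT; rewrite -UlT setD11.
case: (U =P l |: T) => [->|UlT]; first by rewrite setU11 setU1K ?lT ?eqxx.
case: ifP => lU; rewrite ?mulr0 //; case: eqP; rewrite ?mulr0 // => UT.
by case: UlT; rewrite -UT setD1K.
Qed.

Lemma swap_setK (a b : 'I_n) (S : {set 'I_n}) : a \in S -> b \notin S ->
  (S :\ a :|: [set b]) :\ b :|: [set a] = S.
Proof.
move=> aS /negbTE bS; apply/setP=> x; rewrite !inE.
case: (eqVneq x a) => [->|_]; first by rewrite ?eqxx ?orbT.
by case: (eqVneq x b) => [->|_] /=; rewrite ?bS ?orbF.
Qed.

Lemma msymX1 (s : 'S_n) (k : 'I_n) : msym s ('X_k : Pol) = 'X_(s k).
Proof. by rewrite /msym mmapX mmap1U. Qed.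

Lemma msym_sgn_lt (s : 'S_n) (l : 'I_n) (T : {set 'I_n}) :
  msym s (sgn_lt l T) = sgn_lt l T.
Proof. exact: rmorph_sign. Qed.

Lemma Rscale0 (p : Pol) : Rscale p 0 = 0.
Proof. by apply/ffunP=> U; rewrite !ffunE mulr0. Qed.

Lemma Rscale1 (f : R) : Rscale 1 f = f.
Proof. by apply/ffunP=> U; rewrite !ffunE mul1r. Qed.

End Exterior.

Section Transposition.
Variable n : nat.
Local Notation Pol := (Pol n).
Local Notation R := (R n).
Variables i j : 'I_n.
Hypothesis hij : val j = (val i).+1.
Local Notation d := ('X_i - 'X_j : Pol).
Local Notation sig := (msym (tperm i j)).

Lemma nat_of_j : nat_of_ord j = (nat_of_ord i).+1.
Proof. exact: hij. Qed.

Lemma j_neq_i : (j == i) = false.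
Proof. by rewrite -val_eqE hij /= gtn_eqF. Qed.

Lemma i_neq_j : (i == j) = false.
Proof. by rewrite eq_sym j_neq_i. Qed.

Lemma Rmul_xR_sub (f : R) : Rmul (xR i - xR j) f = Rscale d f.
Proof.
rewrite -Rmul_polR; congr Rmul.
by apply/ffunP=> U; rewrite !ffunE; case: ifP; rewrite ?subr0.
Qed.

Lemma s_omE (l : 'I_n) :
  s_om i j l = if l == i then om i + Rscale d (om j) else om l.
Proof. by rewrite /s_om Rmul_xR_sub. Qed.

(* s_i omega_S: only the factor omega_i moves, to omega_i + d omega_j; the
   correction vanishes if j is in S and carries no sign since j = i + 1. *)
Definition s_omS (S : {set 'I_n}) : R := omS S +
  (if (i \in S) && (j \notin S) then Rscale d (omS (S :\ i :|: [set j])) else 0).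

Lemma Rmul_s_om_s_omS (l : 'I_n) (T : {set 'I_n}) :
  (forall t, t \in T -> (l < t)%N) -> Rmul (s_om i j l) (s_omS T) = s_omS (l |: T).
Proof.
move=> ltT; have /negbTE lT : l \notin T by apply/negP=> /ltT; rewrite ltnn.
rewrite s_omE /s_omS; case: (eqVneq l i) => [eli | li].
  subst l; rewrite lT /= addr0 RmulDl RmulZl !Rmul_om_omS lT sgn_lt_min //.
  rewrite Rscale1 !inE eqxx j_neq_i /=.
  case jT: (j \in T) => /=; first by rewrite Rscale0 addr0.
  rewrite setU1K ?lT // [_ :|: [set j]]setUC sgn_lt_min ?Rscale1 // => t tT.
  have := ltT t tT; have : t != j by apply: contraNneq (negbT jT) => <-.
  by move: nat_of_j; rewrite -val_eqE /=; lia.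
have il : (i == l) = false by rewrite eq_sym (negbTE li).
rewrite RmulDr Rmul_om_omS lT sgn_lt_min // Rscale1 !inE il /=.
case iT: (i \in T) => /=; last by rewrite Rmul0r.
have /negbTE jl : j != l by move: nat_of_j (ltT i iT); rewrite -val_eqE /=; lia.
rewrite jl /=; case jT: (j \in T) => /=; first by rewrite Rmul0r.
rewrite RmulZr Rmul_om_omS !inE lT andbF (eq_sym l j) jl /=.
rewrite sgn_lt_min ?Rscale1; last first.
  move=> t; rewrite !inE => /orP[/andP[_ /ltT] // | /eqP ->].
  by move: nat_of_j (ltT i iT); lia.
congr (_ + Rscale _ (omS _)); apply/setP=> x; rewrite !inE.
by case: (eqVneq x l) => [->|] //=; rewrite li.
Qed.

Lemma s_basisE (S : {set 'I_n}) : s_basis i j S = s_omS S.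
Proof.
have : sorted (fun a b : 'I_n => (a < b)%N) (enum S).
  apply: sorted_filter; first by move=> ? ? ?; apply: ltn_trans.
  by rewrite -enumT; have := iota_ltn_sorted 0 n; rewrite -val_enum_ord sorted_map.
rewrite /s_basis -[in RHS](set_enum S); elim: (enum S) => [|l s IH] /= sorted_ls.
  by rewrite Rone_omS /s_omS set_nil !inE addr0.
rewrite set_cons -Rmul_s_om_s_omS ?IH ?(path_sorted sorted_ls) // => t.
rewrite inE; apply/allP: t; apply: order_path_min sorted_ls.
by move=> ? ? ?; apply: ltn_trans.
Qed.

Lemma swap_setP (S U : {set 'I_n}) :
  (i \in S) && (j \notin S) && (U == S :\ i :|: [set j]) =
  (j \in U) && (i \notin U) && (S == U :\ j :|: [set i]).
Proof.
by apply/idP/idP => /andP[/andP[? ?] /eqP->];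
  rewrite swap_setK // !inE !eqxx orbT /= ?i_neq_j ?j_neq_i.
Qed.

Lemma sRE (f : R) : sR i j f = [ffun U => sig (f U) +
  (if (j \in U) && (i \notin U) then d * sig (f (U :\ j :|: [set i])) else 0)].
Proof.
apply/ffunP=> U; rewrite /sR sum_ffunE ffunE.
transitivity (\sum_S (sig (f S) * (U == S)%:R +
  (if (i \in S) && (j \notin S) && (U == S :\ i :|: [set j])
   then d * sig (f S) else 0))).
  apply: eq_bigr => S _; rewrite Rmul_polR s_basisE !ffunE mulrDr; congr (_ + _).
  case: ifP => _ /=; rewrite ?ffunE ?mulr0 //.
  by case: eqP => _; rewrite ?mulr0 ?mulr1 // mulrC.
rewrite big_split /=; congr (_ + _).
  rewrite (bigD1 U) //= eqxx mulr1 [X in _ + X]big1 ?addr0 // => S /negbTE SU.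
  by rewrite eq_sym SU mulr0.
under eq_bigr do rewrite swap_setP.
case: ((j \in U) && (i \notin U)) => /=; last by rewrite big1.
by rewrite -big_mkcond big_pred1_eq.
Qed.

Lemma sRB (f g : R) : sR i j (f - g) = sR i j f - sR i j g.
Proof.
rewrite !sRE; apply/ffunP=> U; rewrite !ffunE !msymB.
by case: ifP => _; rewrite ?subr0 //; ring.
Qed.

Lemma sR0 : sR i j 0 = 0.
Proof. by have := sRB 0 0; rewrite !subrr. Qed.

Lemma sRZ (p : Pol) (f : R) : sR i j (Rscale p f) = Rscale (sig p) (sR i j f).
Proof.
rewrite !sRE; apply/ffunP=> U; rewrite !ffunE !msymM.
by case: ifP => _; rewrite ?mulr0 ?addr0 //; ring.
Qed.

Lemma sR_om (l : 'I_n) : sR i j (om l) = s_om i j l.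
Proof.
rewrite /sR (bigD1 [set l]) //= big1 ?addr0 => [|S /negbTE Sl]; last first.
  rewrite ffunE Sl msym0 (_ : polR 0 = 0) ?Rmul0l //.
  by apply/ffunP=> U; rewrite !ffunE; case: ifP.
rewrite ffunE eqxx msym1 Rmul_polR Rscale1 s_basisE s_omE /s_omS !inE -om_omS.
case: (eqVneq l i) => [->|li] /=; last by rewrite addr0.
by rewrite j_neq_i /= setDv set0U -om_omS.
Qed.

Lemma sgn_lt_succ_notin (U : {set 'I_n}) :
  i \notin U -> sgn_lt i (U :\ j) = sgn_lt j (U :\ j).
Proof.
move=> /negbTE iU; rewrite /sgn_lt; congr (_ ^+ _); apply: eq_card => t; rewrite !inE.
case: (eqVneq t i) => [->|]; first by rewrite iU andbF.
by rewrite -val_eqE /= => ti; congr (_ && _); apply/idP/idP; move: nat_of_j; lia.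
Qed.

Lemma sgn_lt_succ_in (U : {set 'I_n}) : i \in U -> j \in U ->
  sgn_lt j (U :\ j) = - sgn_lt i (U :\ i).
Proof.
move=> iU jU; rewrite /sgn_lt.
rewrite (_ : [set t in U :\ j | (t < j)%N] = i |: [set t in U :\ i | (t < i)%N]).
  by rewrite cardsU1 !inE eqxx /= exprD expr1 mulN1r.
apply/setP=> t; rewrite !inE.
case: (eqVneq t i) => [->|ti]; first by rewrite i_neq_j iU nat_of_j ltnSn.
case: (eqVneq t j) => [->|tj] /=; first by rewrite nat_of_j ltnNge leqnSn andbF.
by case: (t \in U) => //=; move: ti tj nat_of_j; rewrite -!val_eqE /=; lia.
Qed.

Lemma sgn_lt_swap (U : {set 'I_n}) (l : 'I_n) :
  l != i -> l != j -> i \notin U -> j \in U ->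
  sgn_lt l ((U :\ j :|: [set i]) :\ l) = sgn_lt l (U :\ l).
Proof.
move=> li lj /negbTE iU jU; rewrite /sgn_lt -(card_preimset _ (@perm_inj _ (tperm i j))).
congr (_ ^+ _); apply: eq_card => t; rewrite !inE.
case: tpermP => [->|->|/eqP/negbTE ti /eqP/negbTE tj].
- by rewrite eqxx j_neq_i iU /= !andbF.
- rewrite eqxx orbT jU !andbT (eq_sym i l) (eq_sym j l) li lj /=.
  by move: li lj nat_of_j; rewrite -!val_eqE /=; lia.
- by rewrite ti tj orbF.
Qed.

Definition sR_morph_mul (w : R) :=
  forall f, sR i j (Rmul w f) = Rmul (sR i j w) (sR i j f).

Lemma sR_morph_mul_om_i : sR_morph_mul (om i).
Proof.
move=> f; rewrite sR_om s_omE eqxx RmulDl RmulZl !sRE !Rmul_omE.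
apply/ffunP=> U; rewrite !ffunE !inE !eqxx j_neq_i i_neq_j /= ?orbT /=.
case iU: (i \in U); case jU: (j \in U) => /=.
- rewrite msymM msym_sgn_lt (sgn_lt_succ_in iU jU) (_ : U :\ i :\ j :|: [set i] = U :\ j).
    by rewrite !addr0; ring.
  apply/setP=> x; rewrite !inE; case: (eqVneq x i) => [->|_] /=;
    by rewrite ?iU ?i_neq_j ?orbF.
- by rewrite msymM msym_sgn_lt !mulr0 !addr0.
- rewrite msymM msym_sgn_lt (_ : (U :\ j :|: [set i]) :\ i = U :\ j).
    by rewrite (sgn_lt_succ_notin (negbT iU)) msym0 !addr0 !add0r.
  apply/setP=> x; rewrite !inE; case: (eqVneq x i) => [->|_] /=;
    by rewrite ?iU ?andbF ?orbF.
- by rewrite msym0 !mulr0 !addr0.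
Qed.

Lemma sR_morph_mul_om_neq (l : 'I_n) : l != i -> sR_morph_mul (om l).
Proof.
move=> /negbTE li f; rewrite sR_om s_omE li !sRE !Rmul_omE.
apply/ffunP=> U; rewrite !ffunE !inE li (eq_sym i l) li /= ?orbF.
case lU: (l \in U) => /=; last by rewrite msym0 add0r andbF msym0 mulr0; case: ifP.
case: (eqVneq l j) => [->|lj] /=.
  rewrite msymM msym_sgn_lt msym0 mulr0 !addr0.
  by case: ifP; rewrite ?addr0.
rewrite msymM msym_sgn_lt.
case jU: (j \in U); case iU: (i \in U) => /=; rewrite ?addr0 //.
rewrite msymM msym_sgn_lt sgn_lt_swap ?li ?iU //.
rewrite (_ : (U :\ j :|: [set i]) :\ l = U :\ l :\ j :|: [set i]); first by ring.
apply/setP=> x; rewrite !inE; case: (eqVneq x l) => [->|_] /=;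
  by rewrite ?li ?andbF ?orbF.
Qed.

Lemma sR_morph_mul_om (l : 'I_n) : sR_morph_mul (om l).
Proof.
by case: (eqVneq l i) => [->|]; [exact: sR_morph_mul_om_i | exact: sR_morph_mul_om_neq].
Qed.

Lemma sR_morph_mul0 : sR_morph_mul 0.
Proof. by move=> f; rewrite Rmul0l sR0 Rmul0l. Qed.

Lemma sR_morph_mulB (v w : R) :
  sR_morph_mul v -> sR_morph_mul w -> sR_morph_mul (v - w).
Proof. by move=> mv mw f; rewrite RmulBl sRB mv mw sRB RmulBl. Qed.

Lemma sR_morph_mul_xR (k : 'I_n) (w : R) :
  sR_morph_mul w -> sR_morph_mul (Rmul (xR k) w).
Proof. by move=> mw f; rewrite /xR !Rmul_polR RmulZl !sRZ mw RmulZl. Qed.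

Lemma sR_morph_mul_omL a (k : 'I_n) : sR_morph_mul (omL a k).
Proof.
elim: a k => [|a IH] k /=; first exact: sR_morph_mul_om.
apply: sR_morph_mulB; last exact/sR_morph_mul_xR/IH.
by case: (val k) => [|k']; [exact: sR_morph_mul0 | exact: IH].
Qed.

Definition omL_prev a (k : 'I_n) : R :=
  match val k with 0 => 0 | k'.+1 => omL a (insubd k k') end.

Lemma omLS a (k : 'I_n) : omL a.+1 k = omL_prev a k - Rscale 'X_k (omL a k).
Proof. by rewrite /= /xR Rmul_polR. Qed.

Lemma omL_prev_j a : omL_prev a j = omL a i.
Proof.
rewrite /omL_prev hij; congr omL.
by apply: val_inj; rewrite val_insubd ltn_ord.
Qed.

Lemma sR_omL_prev a (k : 'I_n) :
  (forall k', k' != i -> sR i j (omL a k') = omL a k') -> k != j ->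
  sR i j (omL_prev a k) = omL_prev a k.
Proof.
move=> fixed kj; rewrite /omL_prev.
case ek: (val k) => [|k']; first exact: sR0.
apply: fixed; apply: contra kj => /eqP/(congr1 val).
rewrite val_insubd (_ : (k' < n)%N); last by have := ltn_ord k; rewrite -ek => /ltnW.
by move=> ei; rewrite -val_eqE ek hij ei.
Qed.

Lemma sR_omL a : (forall k, k != i -> sR i j (omL a k) = omL a k) /\
  sR i j (omL a i) = omL a i + Rscale d (omL a j).
Proof.
elim: a => [|a [IHfix IHi]].
  by split=> [k /negbTE ki|]; rewrite /= sR_om s_omE ?ki ?eqxx.
have sR_omL_j : sR i j (omL a.+1 j) = omL a.+1 j.
  rewrite omLS sRB sRZ msymX1 tpermR omL_prev_j IHi IHfix ?j_neq_i //.
  by apply/ffunP=> U; rewrite !ffunE; ring.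
split=> [k ki|].
  case: (eqVneq k j) => [->|kj]; first exact: sR_omL_j.
  by rewrite omLS sRB sRZ msymX1 tpermD 1?eq_sym // sR_omL_prev // IHfix.
rewrite omLS sRB sRZ msymX1 tpermL sR_omL_prev ?i_neq_j // IHi omLS omL_prev_j.
by apply/ffunP=> U; rewrite !ffunE; ring.
Qed.

Lemma subr_msym_tperm_dvd (p : Pol) : exists q, p - sig p = d * q.
Proof.
pose dvd_d (r : Pol) := exists q, r - sig r = d * q.
have dvd_dM p1 p2 : dvd_d p1 -> dvd_d p2 -> dvd_d (p1 * p2).
  move=> [q1 E1] [q2 E2]; exists (q1 * p2 + sig p1 * q2).
  by rewrite msymM -[sig p2](subKr p2) E2 -[sig p1](subKr p1) E1; ring.
have dvd_dX k : dvd_d 'X_k.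
  rewrite /dvd_d msymX1; case: tpermP => [->|->|_ _].
  - by exists 1; rewrite mulr1.
  - by exists (-1); rewrite mulrN1 opprB.
  - by exists 0; rewrite subrr mulr0.
have dvd_dXm m : dvd_d 'X_[m].
  rewrite mpolyXE_id; apply: big_ind => [|p1 p2|k _]; [|exact: dvd_dM|].
    by exists 0; rewrite msym1 subrr mulr0.
  elim: (m k) => [|e IHe]; last by rewrite exprS; apply: dvd_dM.
  by exists 0; rewrite expr0 msym1 subrr mulr0.
elim/mpolyind: p => [|c m p _ _ [q Eq]]; first by exists 0; rewrite msym0 subrr mulr0.
have [q' Eq'] := dvd_dXm m.
exists (c *: q' + q).
by rewrite msymD msymZ mulrDr -scalerAr -Eq' -Eq scalerBr; ring.
Qed.

Lemma Tdem_exists (f : R) : exists g, Rmul (xR i - xR j) g = f - sR i j f.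
Proof.
have [q Eq] := fin_all_exists (fun U => subr_msym_tperm_dvd (f U)).
exists [ffun U => q U -
   (if (j \in U) && (i \notin U) then sig (f (U :\ j :|: [set i])) else 0)].
rewrite Rmul_xR_sub sRE; apply/ffunP=> U; rewrite !ffunE mulrBr -Eq.
by case: ifP => _; rewrite ?mulr0; ring.
Qed.

Lemma Tdem_spec (f : R) : Rscale d (Tdem i j f) = f - sR i j f.
Proof. by rewrite -Rmul_xR_sub; exact: (epsilon_spec _ _ (Tdem_exists f)). Qed.

Lemma Rscale_d_inj : injective (Rscale d).
Proof.
have d_neq0 : d != 0.
  apply/eqP=> /(congr1 (mcoeff U_(i))).
  by rewrite mcoeffB !mcoeffXU eqxx j_neq_i mcoeff0 subr0.
move=> f g /ffunP fg; apply/ffunP=> U.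
by apply: (mulfI d_neq0); have := fg U; rewrite !ffunE.
Qed.

Lemma Tdem_Rmul_fixed (w : R) : sR_morph_mul w -> sR i j w = w ->
  forall f, Tdem i j (Rmul w f) = Rmul w (Tdem i j f).
Proof.
move=> mw fixw f; apply: Rscale_d_inj.
by rewrite Tdem_spec -RmulZr Tdem_spec RmulBr mw fixw.
Qed.

Lemma omLS_j a : omL a.+1 j = omL a i - Rmul (xR j) (omL a j).
Proof. by rewrite omLS omL_prev_j /xR Rmul_polR. Qed.

End Transposition.

Theorem proposition2p11 (n : nat) (i j : 'I_n) (hij : val j = (val i).+1)
  (a : nat) :
  (forall k : 'I_n, k != i -> forall f : R n,
     Tdem i j (Rmul (omL a k) f) = Rmul (omL a k) (Tdem i j f)) /\
  (forall f : R n,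
     Tdem i j (Rmul (omL a i - Rmul (xR j) (omL a j)) f)
     = Rmul (omL a i - Rmul (xR j) (omL a j)) (Tdem i j f)).
Proof.
have Tdem_omL b k : k != i -> forall f : R n,
    Tdem i j (Rmul (omL b k) f) = Rmul (omL b k) (Tdem i j f).
  move=> ki; apply: (Tdem_Rmul_fixed hij); first exact: sR_morph_mul_omL.
  exact: (sR_omL hij b).1.
split; first exact: Tdem_omL.
by rewrite -(omLS_j hij); apply: Tdem_omL; rewrite (j_neq_i hij).
Qed.
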